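(* For every matrix $A=[a_{ij}]_{i,j=1}^2\in\mathbb{C}^{2\times 2}$, writing $s=\operatorname{tr}A$ and $p=\det A$: (i) $\mu_E(A)<1$ if and only if $(s,p)\in\mathbb{G}$ and $\displaystyle |a_{21}|\sup_{z\in\mathbb{D}}\frac{1-|z|^2}{|1-sz+pz^2|}<1$; (ii) $\mu_E(A)\le 1$ if and only if $(s,p)\in\Gamma$ and $\displaystyle \frac{|a_{21}|(1-|z|^2)}{|1-sz+pz^2|}\le 1$ for all $z\in\mathbb{D}$.
   Context: $\mathbb{D}$ is the open unit disc in $\mathbb{C}$. The symmetrised bidisc is $\mathbb{G}=\{(z+w,zw): |z|<1,|w|<1\}\subset\mathbb{C}^2$ and $\Gamma=\{(z+w,zw):|z|\le1,|w|\le1\}$ is its closure. Let $E=\operatorname{span}\{I, \begin{pmatrix}0&1\\0&0\end{pmatrix}\}\subset\mathbb{C}^{2\times2}$, i.e. $E$ consists of the matrices $\begin{pmatrix}z&w\\0&z\end{pmatrix}$, $z,w\in\mathbb{C}$. For $A\in\mathbb{C}^{2\times2}$ the structured singular value $\mu_E(A)$ is defined by $1/\mu_E(A)=\inf\{\|X\|: X\in E,\ \det(I-AX)=0\}$ (operator norm; with $\mu_E(A)=0$ if no such $X$ exists). *)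

From Stdlib Require Import Reals Lra ClassicalEpsilon.
Open Scope R_scope.

Record Cplx := mkC { re : R; im : R }.
Definition C0 : Cplx := mkC 0 0.
Definition C1 : Cplx := mkC 1 0.
Definition Cadd (a b : Cplx) : Cplx := mkC (re a + re b) (im a + im b).
Definition Copp (a : Cplx) : Cplx := mkC (- re a) (- im a).
Definition Csub (a b : Cplx) : Cplx := Cadd a (Copp b).
Definition Cmul (a b : Cplx) : Cplx :=
  mkC (re a * re b - im a * im b) (re a * im b + im a * re b).
Definition Cmod (a : Cplx) : R := sqrt (re a ^ 2 + im a ^ 2).

Definition Rsup (E : R -> Prop) : R :=
  epsilon (inhabits 0) (fun m => is_lub E m).
Definition Rinf (E : R -> Prop) : R := - Rsup (fun t => E (- t)).

Record M2 := mkM2 { a11 : Cplx; a12 : Cplx; a21 : Cplx; a22 : Cplx }.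
Definition V2 : Type := (Cplx * Cplx)%type.

Definition M2apply (X : M2) (v : V2) : V2 :=
  (Cadd (Cmul (a11 X) (fst v)) (Cmul (a12 X) (snd v)),
   Cadd (Cmul (a21 X) (fst v)) (Cmul (a22 X) (snd v))).
Definition M2mul (X Y : M2) : M2 :=
  mkM2 (Cadd (Cmul (a11 X) (a11 Y)) (Cmul (a12 X) (a21 Y)))
       (Cadd (Cmul (a11 X) (a12 Y)) (Cmul (a12 X) (a22 Y)))
       (Cadd (Cmul (a21 X) (a11 Y)) (Cmul (a22 X) (a21 Y)))
       (Cadd (Cmul (a21 X) (a12 Y)) (Cmul (a22 X) (a22 Y))).
Definition M2sub (X Y : M2) : M2 :=
  mkM2 (Csub (a11 X) (a11 Y)) (Csub (a12 X) (a12 Y))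
       (Csub (a21 X) (a21 Y)) (Csub (a22 X) (a22 Y)).
Definition M2id : M2 := mkM2 C1 C0 C0 C1.
Definition M2tr (X : M2) : Cplx := Cadd (a11 X) (a22 X).
Definition M2det (X : M2) : Cplx :=
  Csub (Cmul (a11 X) (a22 X)) (Cmul (a12 X) (a21 X)).

Definition V2norm (v : V2) : R :=
  sqrt (Cmod (fst v) ^ 2 + Cmod (snd v) ^ 2).
Definition opnorm (X : M2) : R :=
  Rsup (fun t => exists v : V2, V2norm v <= 1 /\ t = V2norm (M2apply X v)).

Definition inE (X : M2) : Prop :=
  exists z w : Cplx, X = mkM2 z w C0 z.

Definition muE_set (A : M2) (r : R) : Prop :=
  exists X : M2, inE X /\ M2det (M2sub M2id (M2mul A X)) = C0 /\ r = opnorm X.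

Definition muE (A : M2) : R :=
  if excluded_middle_informative (exists r, muE_set A r)
  then / Rinf (muE_set A) else 0.

Definition inG (s p : Cplx) : Prop :=
  exists z w : Cplx, Cmod z < 1 /\ Cmod w < 1 /\ s = Cadd z w /\ p = Cmul z w.
Definition inGamma (s p : Cplx) : Prop :=
  exists z w : Cplx, Cmod z <= 1 /\ Cmod w <= 1 /\ s = Cadd z w /\ p = Cmul z w.

Definition ratio (s p z : Cplx) : R :=
  (1 - Cmod z ^ 2) / Cmod (Cadd (Csub C1 (Cmul s z)) (Cmul p (Cmul z z))).

From Pilot Require Import Defs.
From Stdlib Require Import Reals Lra Psatz ClassicalEpsilon.
From Coquelicot Require Complex.
Open Scope R_scope.

(* For X = [[z, w], [0, z]] in E, det (I - A X) = q(z) - a21 w with q(z) = 1 - s z + p z^2,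
   and ||X|| is the positive root n of n^2 = |w| n + |z|^2.  So mu_E(A) <= 1/c exactly when every
   such singular pair (z, w) satisfies c^2 <= |w| c + |z|^2.  Writing q(z) = (1 - l1 z)(1 - l2 z),
   the pairs (1/li, 0) force the eigenvalue condition (G or Gamma), and the pairs (z, q(z)/a21)
   with |z| < 1 force the bound on |a21| (1 - |z|^2) / |q(z)|.  Conversely, |q(z)| >= (1 - rho |z|)^2
   when |l1|, |l2| <= rho, which together with the ratio bound gives the lower bound on every
   singular pair; in the strict case the margin is made uniform by an explicit choice of c. *)

Section StructuredSingularValue.
Import Coquelicot.Complex.
Import Defs.

Definition toC (a : Cplx) : C := (re a, im a).
Definition ofC (c : C) : Cplx := mkC (fst c) (snd c).

Lemma toC_ofC c : toC (ofC c) = c.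
Proof. now destruct c. Qed.

Lemma toC_inj a b : toC a = toC b -> a = b.
Proof. destruct a, b; unfold toC; cbn; intros [= -> ->]; reflexivity. Qed.

Lemma toC_add a b : toC (Cadd a b) = (toC a + toC b)%C. Proof. reflexivity. Qed.
Lemma toC_mul a b : toC (Cmul a b) = (toC a * toC b)%C. Proof. reflexivity. Qed.
Lemma toC_sub a b : toC (Csub a b) = (toC a - toC b)%C. Proof. reflexivity. Qed.
Lemma toC_0 : toC C0 = RtoC 0. Proof. reflexivity. Qed.
Lemma toC_1 : toC C1 = RtoC 1. Proof. reflexivity. Qed.
Lemma Cmod_toC a : Cmod a = Complex.Cmod (toC a). Proof. reflexivity. Qed.

Lemma Cmod_nonneg a : 0 <= Cmod a.
Proof. apply sqrt_pos. Qed.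

Lemma Cmod_Cmul a b : Cmod (Cmul a b) = Cmod a * Cmod b.
Proof. rewrite !Cmod_toC, toC_mul. apply Cmod_mult. Qed.

Lemma Cmod_C0 : Cmod C0 = 0.
Proof. rewrite Cmod_toC, toC_0. apply Cmod_0. Qed.

Lemma Csub_eq_0 a b : Csub a b = C0 <-> a = b.
Proof.
  split; intros E.
  - apply toC_inj. apply (f_equal toC) in E. rewrite toC_sub, toC_0 in E.
    replace (toC a) with (toC a - toC b + toC b)%C by ring. rewrite E. ring.
  - subst b. apply toC_inj. rewrite toC_sub, toC_0. ring.
Qed.

Lemma exists_Cmul_eq q a : Cmod a <> 0 -> exists w, q = Cmul a w.
Proof.
  intros Ha. exists (ofC (toC q / toC a)%C). apply toC_inj. rewrite toC_mul, toC_ofC.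
  field. intros E. apply Ha. rewrite Cmod_toC, E. apply Cmod_0.
Qed.

(* The largest singular value of [[r, m], [0, r]]: the positive root of n^2 = m n + r^2. *)
Definition jordan_norm (r m : R) : R := (m + sqrt (m ^ 2 + 4 * r ^ 2)) / 2.

Lemma jordan_norm_spec r m : 0 <= m ->
  jordan_norm r m ^ 2 = m * jordan_norm r m + r ^ 2 /\ m <= jordan_norm r m.
Proof.
  intros Hm. unfold jordan_norm.
  assert (HS : sqrt (m ^ 2 + 4 * r ^ 2) ^ 2 = m ^ 2 + 4 * r ^ 2) by (apply pow2_sqrt; nra).
  assert (m <= sqrt (m ^ 2 + 4 * r ^ 2)).
  { rewrite <- (sqrt_pow2 m Hm) at 1. apply sqrt_le_1_alt. nra. }
  split; nra.
Qed.

Lemma le_jordan_norm c r m : 0 <= m -> 0 < c ->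
  c <= jordan_norm r m <-> c ^ 2 <= m * c + r ^ 2.
Proof.
  intros Hm Hc. destruct (jordan_norm_spec r m Hm) as [Hn Hmn].
  set (n := jordan_norm r m) in *.
  assert (E : c ^ 2 - m * c - r ^ 2 = (c - n) * (c + n - m)).
  { transitivity (c ^ 2 - m * c - (n ^ 2 - m * n)); [rewrite Hn | ]; ring. }
  split; intros H; nra.
Qed.

Lemma jordan_norm_r0 r : 0 <= r -> jordan_norm r 0 = r.
Proof.
  intros Hr. unfold jordan_norm. replace (0 ^ 2 + 4 * r ^ 2) with ((2 * r) ^ 2) by ring.
  rewrite sqrt_pow2 by lra. field.
Qed.

Lemma jordan_norm_quadratic_bound r m x y : 0 <= r -> 0 <= m -> 0 <= x -> 0 <= y ->
  (r * x + m * y) ^ 2 + (r * y) ^ 2 <= jordan_norm r m ^ 2 * (x ^ 2 + y ^ 2).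
Proof.
  intros Hr Hm Hx Hy. destruct (jordan_norm_spec r m Hm) as [Hn Hmn].
  set (n := jordan_norm r m) in *.
  assert (Hgap : n * (n ^ 2 * (x ^ 2 + y ^ 2) - (r * x + m * y) ^ 2 - (r * y) ^ 2)
    = m * (n * x - r * y) ^ 2 + (n ^ 2 - m * n - r ^ 2) * (n * x ^ 2 + (n + m) * y ^ 2))
    by ring.
  replace (n ^ 2 - m * n - r ^ 2) with 0 in Hgap by lra.
  destruct (Req_dec n 0) as [Hn0 | Hn0].
  - assert (r = 0) by nra. assert (m = 0) by lra. subst. nra.
  - assert (0 <= m * (n * x - r * y) ^ 2) by (apply Rmult_le_pos; [lra | apply pow2_ge_0]).
    assert (0 < n) by lra.
    apply Rmult_le_reg_l with n; [lra |]. nra.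
Qed.

Definition Emx (z w : Cplx) : M2 := mkM2 z w C0 z.

Lemma Emx_apply z w a b :
  M2apply (Emx z w) (a, b) = (Cadd (Cmul z a) (Cmul w b), Cmul z b).
Proof.
  unfold M2apply, Emx; cbn. f_equal. apply toC_inj.
  rewrite toC_add, !toC_mul, toC_0. ring.
Qed.

Lemma exists_phase_aligned (a b : C) :
  exists u : C, Complex.Cmod u = 1 /\ Complex.Cmod (a * u + b) = Complex.Cmod a + Complex.Cmod b.
Proof.
  destruct (Ceq_dec a 0) as [-> | Ha].
  { exists (RtoC 1). rewrite Cmod_1, Cmod_0, Cmult_0_l, Cplus_0_l. split; [reflexivity | ring]. }
  destruct (Ceq_dec b 0) as [-> | Hb].
  { exists (RtoC 1). rewrite Cmod_1, Cmod_0, Cmult_1_r, Cplus_0_r. split; [reflexivity | ring]. }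
  assert (Hra : 0 < Complex.Cmod a) by (apply Cmod_gt_0; exact Ha).
  assert (Hrb : 0 < Complex.Cmod b) by (apply Cmod_gt_0; exact Hb).
  (* u = b conj(a) / (|a| |b|) turns a u into a positive multiple of b. *)
  exists (RtoC (/ (Complex.Cmod a * Complex.Cmod b)) * (b * Cconj a))%C. split.
  - rewrite !Cmod_mult, Cmod_conj, Cmod_R, Rabs_pos_eq.
    + field. lra.
    + apply Rlt_le, Rinv_0_lt_compat. nra.
  - assert (E : (a * (RtoC (/ (Complex.Cmod a * Complex.Cmod b)) * (b * Cconj a)) + b
                 = RtoC (Complex.Cmod a / Complex.Cmod b + 1) * b)%C).
    { transitivity (RtoC (/ (Complex.Cmod a * Complex.Cmod b)) * (a * Cconj a) * b + b)%C;
        [ring |].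
      rewrite <- Cmod2_conj, <- !RtoC_mult, RtoC_plus.
      replace (/ (Complex.Cmod a * Complex.Cmod b) * Complex.Cmod a ^ 2)
        with (Complex.Cmod a / Complex.Cmod b) by (field; lra).
      ring. }
    rewrite E, Cmod_mult, Cmod_R, Rabs_pos_eq.
    + field. lra.
    + assert (0 < Complex.Cmod a / Complex.Cmod b) by (apply Rdiv_lt_0_compat; lra). lra.
Qed.

Lemma norm_Emx_apply_le z w v :
  V2norm (M2apply (Emx z w) v) <= jordan_norm (Cmod z) (Cmod w) * V2norm v.
Proof.
  destruct v as [a b]. rewrite Emx_apply. unfold V2norm; cbn [fst snd].
  rewrite Cmod_Cmul.
  pose proof (Cmod_nonneg z) as Hr; pose proof (Cmod_nonneg w) as Hm.
  pose proof (Cmod_nonneg a) as Ha; pose proof (Cmod_nonneg b) as Hb.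
  assert (Htri : Cmod (Cadd (Cmul z a) (Cmul w b)) <= Cmod z * Cmod a + Cmod w * Cmod b).
  { rewrite !Cmod_toC, toC_add, !toC_mul, <- !Cmod_mult. apply Cmod_triangle. }
  pose proof (Cmod_nonneg (Cadd (Cmul z a) (Cmul w b))).
  pose proof (jordan_norm_quadratic_bound _ _ _ _ Hr Hm Ha Hb).
  destruct (jordan_norm_spec (Cmod z) (Cmod w) Hm) as [_ Hn].
  rewrite <- (sqrt_pow2 (jordan_norm (Cmod z) (Cmod w))) by lra.
  rewrite <- sqrt_mult by nra.
  apply sqrt_le_1_alt. nra.
Qed.

Lemma Emx_norm_attained z w : exists v, V2norm v <= 1 /\
  V2norm (M2apply (Emx z w) v) = jordan_norm (Cmod z) (Cmod w).
Proof.
  set (r := Cmod z); set (m := Cmod w); set (n := jordan_norm r m).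
  assert (Hr : 0 <= r) by apply Cmod_nonneg. assert (Hm : 0 <= m) by apply Cmod_nonneg.
  destruct (jordan_norm_spec r m Hm) as [Hn Hmn]. fold n in Hn, Hmn.
  (* The maximising direction is (r u, n), u aligning the phases of z r u and w n. *)
  destruct (exists_phase_aligned (toC z * RtoC r) (toC w * RtoC n)) as [u [Hu Hal]].
  rewrite !Cmod_mult, !Cmod_R, !Rabs_pos_eq in Hal by lra.
  set (S := sqrt (r ^ 2 + n ^ 2)).
  assert (HS : S ^ 2 = r ^ 2 + n ^ 2) by (apply pow2_sqrt; nra).
  assert (HS0 : 0 <= S) by apply sqrt_pos.
  set (k := / S).
  assert (Hk : 0 <= k) by (unfold k; destruct (Req_dec S 0) as [-> | ];
    [rewrite Rinv_0; lra | apply Rlt_le, Rinv_0_lt_compat; lra]).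
  exists (ofC (RtoC (k * r) * u), ofC (RtoC (k * n))).
  rewrite Emx_apply. unfold V2norm; cbn [fst snd].
  rewrite !Cmod_toC, toC_add, !toC_mul, !toC_ofC.
  replace (toC z * (RtoC (k * r) * u) + toC w * RtoC (k * n))%C
    with (RtoC k * (toC z * RtoC r * u + toC w * RtoC n))%C by (rewrite !RtoC_mult; ring).
  rewrite !Cmod_mult, Hal, Hu, !Cmod_R, !Rabs_pos_eq by nra.
  change (Complex.Cmod (toC z)) with r. change (Complex.Cmod (toC w)) with m.
  replace (r * r + m * n) with (n ^ 2) by lra.
  replace ((k * r * 1) ^ 2 + (k * n) ^ 2) with ((k * S) ^ 2)
    by (rewrite Rpow_mult_distr, HS; ring).
  replace ((k * n ^ 2) ^ 2 + (r * (k * n)) ^ 2) with ((k * S * n) ^ 2)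
    by (rewrite !Rpow_mult_distr, HS; ring).
  assert (0 <= k * S) by (apply Rmult_le_pos; lra).
  rewrite (sqrt_pow2 (k * S)), (sqrt_pow2 (k * S * n)) by (try apply Rmult_le_pos; lra).
  destruct (Req_dec S 0) as [HS00 | HSpos].
  - assert (n <= 0) by nra. rewrite HS00. split; lra.
  - assert (Hk1 : k * S = 1) by (unfold k; field; lra). rewrite Hk1. lra.
Qed.

Lemma Rsup_lub (E : R -> Prop) :
  (exists x, E x) -> (exists b, forall x, E x -> x <= b) -> is_lub E (Rsup E).
Proof.
  intros [x Hx] [b Hb]. unfold Rsup. apply epsilon_spec.
  destruct (completeness E) as [m Hm]; [exists b; exact Hb | exists x; exact Hx |].
  exists m. exact Hm.
Qed.

Lemma opnorm_Emx z w : opnorm (Emx z w) = jordan_norm (Cmod z) (Cmod w).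
Proof.
  unfold opnorm. set (n := jordan_norm (Cmod z) (Cmod w)).
  destruct (Emx_norm_attained z w) as [v0 [Hv0 Hattained]].
  assert (Hn : 0 <= n) by (apply Rle_trans with (Cmod w);
    [apply Cmod_nonneg | apply jordan_norm_spec, Cmod_nonneg]).
  assert (Hbound : forall t, (exists v, V2norm v <= 1 /\ t = V2norm (M2apply (Emx z w) v)) ->
    t <= n).
  { intros t [v [Hv ->]]. eapply Rle_trans; [apply norm_Emx_apply_le |]. fold n. nra. }
  destruct (Rsup_lub _ (ex_intro _ _ (ex_intro _ v0 (conj Hv0 eq_refl))) (ex_intro _ n Hbound))
    as [Hub Hleast].
  apply Rle_antisym.
  - apply Hleast. exact Hbound.
  - fold n in Hattained. rewrite <- Hattained. apply Hub. exists v0. split; [exact Hv0 | reflexivity].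
Qed.

(* det (I - z A) = 1 - s z + p z^2 with s = tr A, p = det A. *)
Definition rev_charpoly (s p z : Cplx) : Cplx := Cadd (Csub C1 (Cmul s z)) (Cmul p (Cmul z z)).

Definition Emx_singular (A : M2) (z w : Cplx) : Prop :=
  M2det (M2sub M2id (M2mul A (Emx z w))) = C0.

Lemma det_I_sub_mul_Emx A z w : M2det (M2sub M2id (M2mul A (Emx z w))) =
  Csub (rev_charpoly (M2tr A) (M2det A) z) (Cmul (a21 A) w).
Proof.
  destruct A as [[] [] [] []], z, w.
  unfold M2det, M2sub, M2id, M2mul, Emx, rev_charpoly, M2tr, Csub, Cadd, Cmul, Copp, C0, C1.
  cbn. f_equal; ring.
Qed.

Lemma Emx_singularE A z w :
  Emx_singular A z w <-> rev_charpoly (M2tr A) (M2det A) z = Cmul (a21 A) w.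
Proof. unfold Emx_singular. rewrite det_I_sub_mul_Emx. apply Csub_eq_0. Qed.

Definition singular_norm_ge (A : M2) (c : R) : Prop :=
  forall z w, Emx_singular A z w -> c <= jordan_norm (Cmod z) (Cmod w).

Lemma muE_setE A t :
  muE_set A t <-> exists z w, Emx_singular A z w /\ t = jordan_norm (Cmod z) (Cmod w).
Proof.
  unfold muE_set, inE. split.
  - intros [X [[z [w ->]] [Hdet ->]]]. exists z, w. split; [exact Hdet | apply opnorm_Emx].
  - intros [z [w [Hdet ->]]]. exists (Emx z w).
    split; [exists z, w; reflexivity | split; [exact Hdet | symmetry; apply opnorm_Emx]].
Qed.

Lemma singular_norm_geE A c : singular_norm_ge A c <-> forall t, muE_set A t -> c <= t.
Proof.
  split.
  - intros H t Ht. apply muE_setE in Ht as [z [w [Hdet ->]]]. exact (H z w Hdet).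
  - intros H z w Hdet. apply H, muE_setE. exists z, w. split; [exact Hdet | reflexivity].
Qed.

Lemma Rinf_glb (S : R -> Prop) : (exists t, S t) -> (exists b, forall t, S t -> b <= t) ->
  (forall t, S t -> Rinf S <= t) /\ (forall c, (forall t, S t -> c <= t) -> c <= Rinf S).
Proof.
  intros [t0 Ht0] [b Hb]. unfold Rinf.
  destruct (Rsup_lub (fun u => S (- u))) as [Hub Hleast].
  { exists (- t0). rewrite Ropp_involutive. exact Ht0. }
  { exists (- b). intros u Hu. specialize (Hb _ Hu). lra. }
  split.
  - intros t Ht. assert (Rsup (fun u => S (- u)) >= - t); [| lra].
    apply Rle_ge, Hub. rewrite Ropp_involutive. exact Ht.
  - intros c Hc. assert (Rsup (fun u => S (- u)) <= - c); [| lra].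
    apply Hleast. intros u Hu. specialize (Hc _ Hu). lra.
Qed.

Lemma inv_Rinf_lt_1 S c0 : 0 < c0 -> (exists t, S t) -> (forall t, S t -> c0 <= t) ->
  / Rinf S < 1 <-> exists c, 1 < c /\ forall t, S t -> c <= t.
Proof.
  intros Hc0 Hne Hb. destruct (Rinf_glb S Hne (ex_intro _ c0 Hb)) as [Hlow Hgreatest].
  pose proof (Hgreatest c0 Hb) as HI.
  assert (Hinv : Rinf S * / Rinf S = 1) by (field; lra).
  assert (Hpos : 0 < / Rinf S) by (apply Rinv_0_lt_compat; lra).
  split.
  - intros H. exists (Rinf S). split; [nra | exact Hlow].
  - intros [c [Hc H]]. pose proof (Hgreatest c H). nra.
Qed.

Lemma inv_Rinf_le_1 S c0 : 0 < c0 -> (exists t, S t) -> (forall t, S t -> c0 <= t) ->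
  / Rinf S <= 1 <-> forall t, S t -> 1 <= t.
Proof.
  intros Hc0 Hne Hb. destruct (Rinf_glb S Hne (ex_intro _ c0 Hb)) as [Hlow Hgreatest].
  pose proof (Hgreatest c0 Hb) as HI.
  assert (Hinv : Rinf S * / Rinf S = 1) by (field; lra).
  assert (Hpos : 0 < / Rinf S) by (apply Rinv_0_lt_compat; lra).
  split.
  - intros H t Ht. pose proof (Hlow t Ht). nra.
  - intros H. pose proof (Hgreatest 1 H). nra.
Qed.
Lemma jordan_norm_ge r m : 0 <= r -> 0 <= m -> r <= jordan_norm r m /\ m <= jordan_norm r m.
Proof. intros Hr Hm. destruct (jordan_norm_spec r m Hm) as [Hn Hmn]. split; nra. Qed.

Lemma muE_set_bounded_below A : exists c0, 0 < c0 /\ forall t, muE_set A t -> c0 <= t.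
Proof.
  set (a := Cmod (a21 A)); set (s := Cmod (M2tr A)); set (p := Cmod (M2det A)).
  assert (Ha : 0 <= a) by apply Cmod_nonneg. assert (Hs : 0 <= s) by apply Cmod_nonneg.
  assert (Hp : 0 <= p) by apply Cmod_nonneg.
  exists (/ (1 + a + s + p)). split; [apply Rinv_0_lt_compat; lra |].
  intros t Ht. apply muE_setE in Ht as [z [w [Hsing ->]]]. apply Emx_singularE in Hsing.
  assert (Hone : 1 <= a * Cmod w + s * Cmod z + p * (Cmod z * Cmod z)).
  { apply (f_equal toC) in Hsing.
    unfold rev_charpoly in Hsing. rewrite toC_add, toC_sub, !toC_mul, toC_1 in Hsing.
    unfold a, s, p. rewrite !Cmod_toC.
    pose proof (Cmod_triangle (toC (a21 A) * toC w) (toC (M2tr A) * toC z)).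
    pose proof (Cmod_triangle (toC (a21 A) * toC w + toC (M2tr A) * toC z)
                              (- (toC (M2det A) * (toC z * toC z)))).
    replace (toC (a21 A) * toC w + toC (M2tr A) * toC z + - (toC (M2det A) * (toC z * toC z)))%C
      with (RtoC 1) in H0 by (rewrite <- Hsing; ring).
    rewrite Cmod_1, Cmod_opp, !Cmod_mult in *. lra. }
  pose proof (Cmod_nonneg z); pose proof (Cmod_nonneg w).
  destruct (jordan_norm_ge (Cmod z) (Cmod w)) as [Hrn Hmn]; try assumption.
  set (n := jordan_norm (Cmod z) (Cmod w)) in *.
  assert (Hn : 1 <= (1 + a + s + p) * n).
  { destruct (Rle_dec 1 n); [nra |].
    assert (Cmod z * Cmod z <= n) by nra. nra. }
  assert (Hinv : (1 + a + s + p) * / (1 + a + s + p) = 1) by (field; lra).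
  assert (0 < / (1 + a + s + p)) by (apply Rinv_0_lt_compat; lra).
  nra.
Qed.

Lemma muE_lt_1_iff A : muE A < 1 <-> exists c, 1 < c /\ singular_norm_ge A c.
Proof.
  unfold muE. destruct (excluded_middle_informative _) as [Hne | Hempty].
  - destruct (muE_set_bounded_below A) as [c0 [Hc0 Hb]].
    rewrite (inv_Rinf_lt_1 _ c0 Hc0 Hne Hb).
    split; intros [c [Hc H]]; exists c; split; try exact Hc; apply singular_norm_geE; exact H.
  - split; [intros _ | lra]. exists 2. split; [lra |].
    apply singular_norm_geE. intros t Ht. exfalso. apply Hempty. exists t. exact Ht.
Qed.

Lemma muE_le_1_iff A : muE A <= 1 <-> singular_norm_ge A 1.
Proof.
  unfold muE. rewrite singular_norm_geE.
  destruct (excluded_middle_informative _) as [Hne | Hempty].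
  - destruct (muE_set_bounded_below A) as [c0 [Hc0 Hb]]. exact (inv_Rinf_le_1 _ c0 Hc0 Hne Hb).
  - split; [intros _ t Ht | lra]. exfalso. apply Hempty. exists t. exact Ht.
Qed.

Lemma exists_Csqrt (c : C) : exists d : C, (d * d = c)%C.
Proof.
  destruct c as [x y].
  set (M := sqrt (x ^ 2 + y ^ 2)).
  assert (HM : M ^ 2 = x ^ 2 + y ^ 2) by (apply pow2_sqrt; nra).
  assert (HM0 : 0 <= M) by apply sqrt_pos.
  assert (Hx1 : 0 <= (M + x) / 2) by nra.
  assert (Hx2 : 0 <= (M - x) / 2) by nra.
  set (u := sqrt ((M + x) / 2)); set (v := sqrt ((M - x) / 2)).
  assert (Hu : u ^ 2 = (M + x) / 2) by (apply pow2_sqrt; lra).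
  assert (Hv : v ^ 2 = (M - x) / 2) by (apply pow2_sqrt; lra).
  assert (Huv : u * v = Rabs y / 2).
  { unfold u, v. rewrite <- sqrt_mult by lra.
    replace ((M + x) / 2 * ((M - x) / 2)) with ((Rabs y / 2) ^ 2)
      by (unfold Rdiv; rewrite Rpow_mult_distr, pow2_abs; nra).
    apply sqrt_pow2. pose proof (Rabs_pos y). lra. }
  destruct (Rle_dec 0 y) as [Hy | Hy].
  - exists (u, v). rewrite Rabs_pos_eq in Huv by lra.
    unfold Cmult; cbn [fst snd]. f_equal; nra.
  - exists (u, - v). rewrite Rabs_left in Huv by lra.
    unfold Cmult; cbn [fst snd]. f_equal; nra.
Qed.

Lemma exists_roots (s p : Cplx) : exists l1 l2 : Cplx, s = Cadd l1 l2 /\ p = Cmul l1 l2.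
Proof.
  destruct (exists_Csqrt (toC s * toC s - 4 * toC p)%C) as [d Hd].
  exists (ofC ((toC s + d) / 2)%C), (ofC ((toC s - d) / 2)%C).
  split; apply toC_inj; rewrite ?toC_add, ?toC_mul, !toC_ofC.
  - field.
  - replace ((toC s + d) / 2 * ((toC s - d) / 2))%C
      with ((toC s * toC s - d * d) / 4)%C by field.
    rewrite Hd. field.
Qed.

Lemma rev_charpoly_factor s p l1 l2 z : s = Cadd l1 l2 -> p = Cmul l1 l2 ->
  toC (rev_charpoly s p z) = ((1 - toC l1 * toC z) * (1 - toC l2 * toC z))%C.
Proof.
  intros -> ->. unfold rev_charpoly.
  rewrite !toC_add, toC_sub, !toC_mul, toC_add, toC_1. ring.
Qed.

Lemma rev_charpoly_lower_bound s p l1 l2 z rho : s = Cadd l1 l2 -> p = Cmul l1 l2 ->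
  Cmod l1 <= rho -> Cmod l2 <= rho -> rho * Cmod z <= 1 ->
  (1 - rho * Cmod z) ^ 2 <= Cmod (rev_charpoly s p z).
Proof.
  intros Hs Hp H1 H2 Hrz.
  assert (Hfactor : forall l, Cmod l <= rho -> 1 - rho * Cmod z <= Complex.Cmod (1 - toC l * toC z)).
  { intros l Hl. pose proof (Cmod_triangle (1 - toC l * toC z) (toC l * toC z)).
    replace (1 - toC l * toC z + toC l * toC z)%C with (RtoC 1) in H by ring.
    rewrite Cmod_1, Cmod_mult in H. rewrite !Cmod_toC in Hl, Hrz |- *.
    pose proof (Cmod_ge_0 (toC z)). nra. }
  rewrite (Cmod_toC (rev_charpoly s p z)), (rev_charpoly_factor s p l1 l2 z Hs Hp), Cmod_mult.
  pose proof (Hfactor l1 H1); pose proof (Hfactor l2 H2).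
  replace ((1 - rho * Cmod z) ^ 2) with ((1 - rho * Cmod z) * (1 - rho * Cmod z)) by ring.
  apply Rmult_le_compat; lra.
Qed.

Lemma rev_charpoly_root s p l1 l2 l : s = Cadd l1 l2 -> p = Cmul l1 l2 ->
  (l = l1 \/ l = l2) -> Cmod l <> 0 -> exists z, Cmod z * Cmod l = 1 /\ rev_charpoly s p z = C0.
Proof.
  intros Hs Hp Hl Hl0.
  assert (HL : toC l <> RtoC 0) by (intros E; apply Hl0; rewrite Cmod_toC, E; apply Cmod_0).
  exists (ofC (/ toC l)%C). split.
  - rewrite !Cmod_toC, toC_ofC, Cmod_inv by exact HL. field. rewrite <- Cmod_toC. exact Hl0.
  - apply toC_inj. rewrite (rev_charpoly_factor s p l1 l2 _ Hs Hp), toC_ofC, toC_0.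
    destruct Hl as [-> | ->]; rewrite Cinv_r by exact HL; ring.
Qed.

Lemma roots_bound_of_singular_norm_ge A c l1 l2 :
  M2tr A = Cadd l1 l2 -> M2det A = Cmul l1 l2 -> singular_norm_ge A c ->
  forall l, (l = l1 \/ l = l2) -> c * Cmod l <= 1.
Proof.
  intros Hs Hp Hc l Hl. destruct (Req_dec (Cmod l) 0) as [Hl0 | Hl0]; [rewrite Hl0; lra |].
  destruct (rev_charpoly_root _ _ l1 l2 l Hs Hp Hl Hl0) as [z [Hzl Hroot]].
  (* The root 1 / l gives the singular pair (1 / l, 0), of norm 1 / |l|. *)
  assert (Hsing : Emx_singular A z C0).
  { apply Emx_singularE. rewrite Hroot. apply toC_inj. rewrite toC_mul, toC_0. ring. }
  specialize (Hc z C0 Hsing). rewrite Cmod_C0, jordan_norm_r0 in Hc by apply Cmod_nonneg.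
  pose proof (Cmod_nonneg l). nra.
Qed.

Lemma inG_of_singular_norm_ge A c : 1 < c -> singular_norm_ge A c -> inG (M2tr A) (M2det A).
Proof.
  intros Hc1 Hc. destruct (exists_roots (M2tr A) (M2det A)) as [l1 [l2 [Hs Hp]]].
  pose proof (roots_bound_of_singular_norm_ge A c l1 l2 Hs Hp Hc l1 (or_introl eq_refl)).
  pose proof (roots_bound_of_singular_norm_ge A c l1 l2 Hs Hp Hc l2 (or_intror eq_refl)).
  pose proof (Cmod_nonneg l1); pose proof (Cmod_nonneg l2).
  exists l1, l2. repeat split; auto; nra.
Qed.

Lemma inGamma_of_singular_norm_ge A : singular_norm_ge A 1 -> inGamma (M2tr A) (M2det A).
Proof.
  intros Hc. destruct (exists_roots (M2tr A) (M2det A)) as [l1 [l2 [Hs Hp]]].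
  pose proof (roots_bound_of_singular_norm_ge A 1 l1 l2 Hs Hp Hc l1 (or_introl eq_refl)).
  pose proof (roots_bound_of_singular_norm_ge A 1 l1 l2 Hs Hp Hc l2 (or_intror eq_refl)).
  exists l1, l2. repeat split; auto; lra.
Qed.

Lemma ratio_rev_charpoly s p z :
  ratio s p z = (1 - Cmod z ^ 2) / Cmod (rev_charpoly s p z).
Proof. reflexivity. Qed.

Lemma ratio_bound_of_singular_norm_ge A c : 1 <= c -> singular_norm_ge A c ->
  forall z, Cmod z < 1 -> c * (Cmod (a21 A) * ratio (M2tr A) (M2det A) z) <= 1.
Proof.
  intros Hc1 Hc z Hz. destruct (Req_dec (Cmod (a21 A)) 0) as [Ha0 | Ha0]; [rewrite Ha0; lra |].
  destruct (exists_Cmul_eq (rev_charpoly (M2tr A) (M2det A) z) (a21 A) Ha0) as [w Hq].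
  pose proof (Hc z w (proj2 (Emx_singularE A z w) Hq)) as Hn.
  apply le_jordan_norm in Hn; [| apply Cmod_nonneg | lra].
  rewrite ratio_rev_charpoly, Hq, Cmod_Cmul.
  pose proof (Cmod_nonneg z); pose proof (Cmod_nonneg w); pose proof (Cmod_nonneg (a21 A)).
  set (a := Cmod (a21 A)) in *; set (r := Cmod z) in *; set (m := Cmod w) in *.
  assert (Hm : 0 < m) by nra.
  assert (Hkey : c * (1 - r ^ 2) <= m).
  { assert (0 <= r ^ 2 * (c ^ 2 - 1)) by (apply Rmult_le_pos; nra). nra. }
  replace (c * (a * ((1 - r ^ 2) / (a * m)))) with (c * (1 - r ^ 2) * / m) by (field; lra).
  assert (Hinv : m * / m = 1) by (field; lra).
  assert (0 < / m) by (apply Rinv_0_lt_compat; lra).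
  nra.
Qed.

Definition ratio_set (s p : Cplx) (t : R) : Prop := exists z : Cplx, Cmod z < 1 /\ t = ratio s p z.

Lemma ratio_set_lub s p B : (forall z, Cmod z < 1 -> ratio s p z <= B) ->
  is_lub (ratio_set s p) (Rsup (ratio_set s p)).
Proof.
  intros HB. apply Rsup_lub.
  - exists (ratio s p C0), C0. split; [rewrite Cmod_C0; lra | reflexivity].
  - exists B. intros t [z [Hz ->]]. exact (HB z Hz).
Qed.

Lemma ratio_sup_lt_1_of_singular_norm_ge A c : 1 < c -> singular_norm_ge A c ->
  Cmod (a21 A) * Rsup (ratio_set (M2tr A) (M2det A)) < 1.
Proof.
  intros Hc1 Hc. pose proof (Cmod_nonneg (a21 A)) as Ha.
  destruct (Req_dec (Cmod (a21 A)) 0) as [Ha0 | Ha0]; [rewrite Ha0; lra |].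
  set (a := Cmod (a21 A)) in *.
  assert (Hbound : forall z, Cmod z < 1 -> ratio (M2tr A) (M2det A) z <= / (c * a)).
  { intros z Hz. pose proof (ratio_bound_of_singular_norm_ge A c (Rlt_le _ _ Hc1) Hc z Hz).
    fold a in H. apply Rmult_le_reg_l with (c * a); [nra |].
    rewrite Rinv_r by nra. lra. }
  destruct (ratio_set_lub _ _ _ Hbound) as [_ Hleast].
  assert (Hsup : Rsup (ratio_set (M2tr A) (M2det A)) <= / (c * a)).
  { apply Hleast. intros t [z [Hz ->]]. exact (Hbound z Hz). }
  apply Rle_lt_trans with (a * / (c * a)).
  - apply Rmult_le_compat_l; lra.
  - replace (a * / (c * a)) with (/ c) by (field; lra).
    rewrite <- Rinv_1. apply Rinv_lt_contravar; lra.
Qed.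

Lemma singular_norm_ge_1_of_inGamma A : inGamma (M2tr A) (M2det A) ->
  (forall z, Cmod z < 1 -> Cmod (a21 A) * ratio (M2tr A) (M2det A) z <= 1) ->
  singular_norm_ge A 1.
Proof.
  intros [l1 [l2 [H1 [H2 [Hs Hp]]]]] Hratio z w Hsing.
  apply le_jordan_norm; [apply Cmod_nonneg | lra |].
  pose proof (Cmod_nonneg z); pose proof (Cmod_nonneg w); pose proof (Cmod_nonneg (a21 A)).
  destruct (Rlt_dec (Cmod z) 1) as [Hz | Hz]; [| nra].
  apply Emx_singularE in Hsing.
  pose proof (rev_charpoly_lower_bound _ _ l1 l2 z 1 Hs Hp H1 H2 ltac:(lra)) as Hlow.
  specialize (Hratio z Hz). rewrite ratio_rev_charpoly in Hratio.
  rewrite Hsing, Cmod_Cmul in Hlow, Hratio.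
  set (a := Cmod (a21 A)) in *; set (r := Cmod z) in *; set (m := Cmod w) in *.
  assert (Ham : 0 < a * m) by nra.
  assert (0 < m) by nra.
  replace (a * ((1 - r ^ 2) / (a * m))) with ((1 - r ^ 2) * / m) in Hratio by (field; nra).
  assert (Hinv : m * / m = 1) by (field; lra).
  assert (0 < / m) by (apply Rinv_0_lt_compat; lra).
  nra.
Qed.

Lemma uniform_margin rho M a : 0 <= rho < 1 -> 0 <= M < 1 -> 0 <= a ->
  exists c, 1 < c /\ forall r m, 0 <= r -> 0 <= m ->
    (rho * r <= 1 -> (1 - rho * r) ^ 2 <= a * m) ->
    (r < 1 -> a * (1 - r ^ 2) <= M * (a * m)) ->
    c ^ 2 <= m * c + r ^ 2.
Proof.
  intros Hrho HM Ha.
  set (d := ((1 - rho) / 2) ^ 2).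
  set (e := (1 - M) * d / (3 * (1 + a))).
  assert (Hd : 0 < d <= (1 - rho) / 2) by (unfold d; split; nra).
  assert (He : 0 < e <= d).
  { unfold e. split.
    - apply Rdiv_lt_0_compat; nra.
    - apply Rmult_le_reg_r with (3 * (1 + a)); [lra |].
      replace ((1 - M) * d / (3 * (1 + a)) * (3 * (1 + a))) with ((1 - M) * d) by (field; lra).
      nra. }
  exists (1 + e). split; [lra |].
  intros r m Hr Hm Hroot Hsup.
  destruct (Rle_dec (1 + e) r) as [Hbig | Hsmall]; [nra |].
  assert (Hrr : rho * r <= (1 + rho) / 2) by nra.
  assert (Hdm : d <= a * m).
  { apply Rle_trans with ((1 - rho * r) ^ 2); [| apply Hroot; lra].
    unfold d. apply pow_incr. lra. }
  (* a m >= d bounds m below uniformly, hence the margin (1 - M) m >= 3 e. *)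
  assert (Hmarg : 3 * e <= (1 - M) * m).
  { apply Rmult_le_reg_r with (1 + a); [lra |].
    replace (3 * e * (1 + a)) with ((1 - M) * d) by (unfold e; field; lra).
    nra. }
  assert (Hgap : (1 - M) * m <= m + r ^ 2 - 1).
  { destruct (Rlt_dec r 1) as [Hr1 | Hr1]; [| nra].
    assert (Hapos : 0 < a) by nra.
    specialize (Hsup Hr1).
    assert (1 - r ^ 2 <= M * m); [| lra].
    apply Rmult_le_reg_l with a; [exact Hapos | nra]. }
  nra.
Qed.

Lemma ratio_le_of_roots s p l1 l2 rho : s = Cadd l1 l2 -> p = Cmul l1 l2 ->
  Cmod l1 <= rho -> Cmod l2 <= rho -> rho < 1 ->
  forall z, Cmod z < 1 -> ratio s p z <= / (1 - rho) ^ 2.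
Proof.
  intros Hs Hp H1 H2 Hrho z Hz. pose proof (Cmod_nonneg z); pose proof (Cmod_nonneg l1).
  assert (Hrz : rho * Cmod z <= rho) by nra.
  pose proof (rev_charpoly_lower_bound s p l1 l2 z rho Hs Hp H1 H2 ltac:(lra)) as Hlow.
  assert (Hq : (1 - rho) ^ 2 <= Cmod (rev_charpoly s p z)).
  { apply Rle_trans with ((1 - rho * Cmod z) ^ 2); [apply pow_incr; lra | exact Hlow]. }
  assert (0 < (1 - rho) ^ 2) by (apply pow_lt; lra).
  rewrite ratio_rev_charpoly. unfold Rdiv.
  apply Rle_trans with (1 * / Cmod (rev_charpoly s p z)).
  - apply Rmult_le_compat_r; [apply Rlt_le, Rinv_0_lt_compat |]; nra.
  - rewrite Rmult_1_l. apply Rinv_le_contravar; lra.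
Qed.

Lemma singular_norm_gt_1_of_inG A : inG (M2tr A) (M2det A) ->
  Cmod (a21 A) * Rsup (ratio_set (M2tr A) (M2det A)) < 1 ->
  exists c, 1 < c /\ singular_norm_ge A c.
Proof.
  intros [l1 [l2 [H1 [H2 [Hs Hp]]]]] Hsup.
  set (rho := Rmax (Cmod l1) (Cmod l2)).
  assert (Hr1 : Cmod l1 <= rho) by apply Rmax_l. assert (Hr2 : Cmod l2 <= rho) by apply Rmax_r.
  assert (Hrho : 0 <= rho < 1) by (split; [pose proof (Cmod_nonneg l1); lra | apply Rmax_lub_lt; lra]).
  set (a := Cmod (a21 A)) in *. assert (Ha : 0 <= a) by apply Cmod_nonneg.
  set (M := Rmax 0 (a * Rsup (ratio_set (M2tr A) (M2det A)))).
  assert (HM : 0 <= M < 1) by (split; [apply Rmax_l | apply Rmax_lub_lt; lra]).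
  destruct (ratio_set_lub _ _ _ (ratio_le_of_roots _ _ l1 l2 rho Hs Hp Hr1 Hr2 (proj2 Hrho)))
    as [Hub _].
  destruct (uniform_margin rho M a Hrho HM Ha) as [c [Hc Hmargin]].
  exists c. split; [exact Hc |]. intros z w Hsing.
  apply Emx_singularE in Hsing.
  apply le_jordan_norm; [apply Cmod_nonneg | lra |].
  pose proof (Cmod_nonneg z) as Hr.
  assert (Hlow : rho * Cmod z <= 1 -> (1 - rho * Cmod z) ^ 2 <= a * Cmod w).
  { intros Hrz. unfold a. rewrite <- Cmod_Cmul, <- Hsing.
    exact (rev_charpoly_lower_bound _ _ l1 l2 z rho Hs Hp Hr1 Hr2 Hrz). }
  apply Hmargin; [exact Hr | apply Cmod_nonneg | exact Hlow |].
  intros Hz.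
  assert (Hpos : 0 < a * Cmod w).
  { assert (Hrz : rho * Cmod z < 1) by nra.
    apply Rlt_le_trans with ((1 - rho * Cmod z) ^ 2); [apply pow_lt; lra | apply Hlow; lra]. }
  assert (Hratio : a * ratio (M2tr A) (M2det A) z <= M).
  { apply Rle_trans with (a * Rsup (ratio_set (M2tr A) (M2det A))); [| apply Rmax_r].
    apply Rmult_le_compat_l; [exact Ha |]. apply Hub. exists z. split; [exact Hz | reflexivity]. }
  rewrite ratio_rev_charpoly, Hsing, Cmod_Cmul in Hratio. fold a in Hratio.
  replace (a * (1 - Cmod z ^ 2)) with (a * ((1 - Cmod z ^ 2) / (a * Cmod w)) * (a * Cmod w))
    by (field; nra).
  apply Rmult_le_compat_r; lra.
Qed.

End StructuredSingularValue.

Theorem proposition3p1 (A : M2) :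
  let s := M2tr A in
  let p := M2det A in
  (muE A < 1 <->
     inG s p /\
     Cmod (a21 A) * Rsup (fun t => exists z : Cplx, Cmod z < 1 /\ t = ratio s p z) < 1)
  /\
  (muE A <= 1 <->
     inGamma s p /\
     (forall z : Cplx, Cmod z < 1 -> Cmod (a21 A) * ratio s p z <= 1)).
Proof.
  intros s p. split; split.
  - intros Hmu. apply muE_lt_1_iff in Hmu as [c [Hc Hsing]]. split.
    + exact (inG_of_singular_norm_ge A c Hc Hsing).
    + exact (ratio_sup_lt_1_of_singular_norm_ge A c Hc Hsing).
  - intros [HG Hsup]. apply muE_lt_1_iff. exact (singular_norm_gt_1_of_inG A HG Hsup).
  - intros Hmu. apply muE_le_1_iff in Hmu. split.
    + exact (inGamma_of_singular_norm_ge A Hmu).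
    + intros z Hz. rewrite <- (Rmult_1_l (_ * _)).
      exact (ratio_bound_of_singular_norm_ge A 1 (Rle_refl 1) Hmu z Hz).
  - intros [HGamma Hratio]. apply muE_le_1_iff.
    exact (singular_norm_ge_1_of_inGamma A HGamma Hratio).
Qed.
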